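(* Let $\mathcal E=\{\lambda_x,\rho_x\}_{x=1}^n$ be an ensemble of states on a finite-dimensional system $A$, let $M=(M_1,\dots,M_{d_S})$ be a measurement on $A$, and let $R$ be a system with $d_R=n$. Then $$P^Q_{\rm succ}(\mathcal E,M)=\|(\Phi_M\otimes\mathrm{id}_R)(\rho_{\mathcal E})\|^\diamond_{R|S}=P_{\rm succ}(\Phi_M(\mathcal E)).$$
   Context: $S$ is a system of dimension $d_S$ with basis $\{|j\rangle\}$; $\Phi_M\in\mathcal C(A,S)$ is the quantum-to-classical channel $\Phi_M(\sigma)=\sum_j{\rm Tr}[\sigma M_j]|j\rangle\langle j|$. $\rho_{\mathcal E}=\sum_x\lambda_x\rho_x\otimes|x\rangle\langle x|\in\mathfrak S(AR)$. $\Phi_M(\mathcal E)=\{\lambda_x,\Phi_M(\rho_x)\}$. $P^Q_{\rm succ}(\mathcal E,M)=\sup\sum_{x,j}\lambda_xp(x|j){\rm Tr}[\rho_xM_j]$ over conditional probabilities $p(x|j)$; $P_{\rm succ}(\mathcal E')=\max_N\sum_x\lambda_x{\rm Tr}[\rho'_xN_x]$ over $n$-outcome measurements $N$. For $X\in\mathcal B_h(SR)$ and $\phi\in\mathcal L(S,R)$, $\langle X,\phi\rangle={\rm Tr}[XC_{\phi^*}]$ where $C_\psi=(\psi\otimes\mathrm{id})(|I\rangle\rangle\langle\langle I|)$ is the Choi matrix and $\phi^*$ the adjoint; $\|X\|^\diamond_{R|S}=\max_{\alpha\in\mathcal C(S,R)}\langle X,\alpha\rangle$ for $X\ge0$. 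*)

From HB Require Import structures.
From mathcomp Require Import all_boot all_order all_algebra.
From mathcomp Require Import classical_sets reals.
From mathcomp.real_closed Require Import complex mxtens.

Set Implicit Arguments.
Unset Strict Implicit.
Unset Printing Implicit Defensive.
Import Order.TTheory GRing.Theory Num.Theory.
Local Open Scope ring_scope.
Local Open Scope classical_set_scope.

Section Q.
Variable R : realType.
Local Notation C := (R[i]).

Definition adjmx m n (A : 'M[C]_(m, n)) : 'M[C]_(n, m) :=
  (map_mx (@conjc R) A)^T.

Definition psd d (A : 'M[C]_d) : Prop :=
  forall v : 'cV[C]_d, 0 <= (adjmx v *m A *m v) 0 0.

Definition is_state d (rho : 'M[C]_d) : Prop := psd rho /\ \tr rho = 1.

Definition is_ensemble d n (lam : 'I_n -> R) (rho : 'I_n -> 'M[C]_d) : Prop :=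
  (forall x, 0 <= lam x) /\ \sum_(x < n) lam x = 1 /\ (forall x, is_state (rho x)).

Definition is_measurement d k (M : 'I_k -> 'M[C]_d) : Prop :=
  (forall j, psd (M j)) /\ \sum_(j < k) M j = 1%:M.

Definition ket_bra d (i j : 'I_d) : 'M[C]_d := delta_mx i j.

Definition qc_channel dA dS (M : 'I_dS -> 'M[C]_dA) (sigma : 'M[C]_dA) : 'M[C]_dS :=
  \sum_(j < dS) (\tr (sigma *m M j)) *: ket_bra j j.

(** (phi (x) id_k)(X), bipartite index (a, x) encoded by mxtens_index *)
Definition tens_id d1 d2 k (phi : 'M[C]_d1 -> 'M[C]_d2) (X : 'M[C]_(d1 * k))
  : 'M[C]_(d2 * k) :=
  \sum_(a < k) \sum_(b < k)
    phi (\matrix_(i, j) X (mxtens_index (i, a)) (mxtens_index (j, b)))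
      *t ket_bra a b.

Definition is_linear_map d1 d2 (phi : 'M[C]_d1 -> 'M[C]_d2) : Prop :=
  forall (c : C) (u v : 'M[C]_d1), phi (c *: u + v) = c *: phi u + phi v.

Definition completely_positive d1 d2 (phi : 'M[C]_d1 -> 'M[C]_d2) : Prop :=
  forall (k : nat) (X : 'M[C]_(d1 * k)), psd X -> psd (tens_id phi X).

Definition trace_preserving d1 d2 (phi : 'M[C]_d1 -> 'M[C]_d2) : Prop :=
  forall X : 'M[C]_d1, \tr (phi X) = \tr X.

Definition is_channel d1 d2 (phi : 'M[C]_d1 -> 'M[C]_d2) : Prop :=
  [/\ is_linear_map phi, completely_positive phi & trace_preserving phi].

Definition hs_adjoint d1 d2 (phi : 'M[C]_d1 -> 'M[C]_d2) (B : 'M[C]_d2)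
  : 'M[C]_d1 :=
  \matrix_(i, j) \tr (adjmx (phi (ket_bra i j)) *m B).

Definition max_ent_op d : 'M[C]_(d * d) :=
  \sum_(a < d) \sum_(b < d) ket_bra a b *t ket_bra a b.

Definition choi d1 d2 (psi : 'M[C]_d1 -> 'M[C]_d2) : 'M[C]_(d2 * d1) :=
  tens_id psi (max_ent_op d1).

Definition pairing dS dR (X : 'M[C]_(dS * dR)) (phi : 'M[C]_dS -> 'M[C]_dR) : C :=
  \tr (X *m choi (hs_adjoint phi)).

Definition diamond_norm dS dR (X : 'M[C]_(dS * dR)) : R :=
  sup [set complex.Re (pairing X alpha) | alpha in [set a | is_channel a]].

Definition cq_state d n (lam : 'I_n -> R) (rho : 'I_n -> 'M[C]_d) : 'M[C]_(d * n) :=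
  \sum_(x < n) (lam x)%:C%C *: (rho x *t ket_bra x x).

Definition is_cond_prob n k (p : 'I_n -> 'I_k -> R) : Prop :=
  (forall x j, 0 <= p x j) /\ (forall j, \sum_(x < n) p x j = 1).

Definition PQ_succ dA n dS (lam : 'I_n -> R) (rho : 'I_n -> 'M[C]_dA)
  (M : 'I_dS -> 'M[C]_dA) : R :=
  sup [set complex.Re (\sum_(x < n) \sum_(j < dS)
          ((lam x * p x j)%:C%C * \tr (rho x *m M j)))
       | p in [set q | is_cond_prob q]].

Definition P_succ d n (lam : 'I_n -> R) (rho : 'I_n -> 'M[C]_d) : R :=
  sup [set complex.Re (\sum_(x < n) (lam x)%:C%C * \tr (rho x *m N x))
       | N in [set N' | @is_measurement d n N']].

End Q.

(* Each of the three quantities is the maximum of a linear functional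
   [w |-> \sum_x \sum_j w x j * lam x Tr[rho_x M_j]] over conditional
   probabilities [w x j] (nonnegative, summing to 1 over the guess [x] for
   each outcome [j]); this maximum is attained by a deterministic guess
   [x = g j] maximising each column. For [P^Q_succ] this is immediate. The
   pairing with the classical-quantum state only sees the diagonal entries
   [alpha(|j><j|)_aa] of a channel, which form a conditional probability by
   complete positivity and trace preservation, and the classical channel
   [|j><j| |-> |g j><g j|] attains the maximum. Likewise [P_succ] only sees the
   diagonal entries of the POVM elements [N_x], which form a conditional
   probability, and [N_x = sum_(j | g j = x) |j><j|] attains it. *)
From mathcomp Require Import all_boot all_order all_algebra.
From mathcomp Require Import classical_sets reals.
From mathcomp.real_closed Require Import complex mxtens.

Set Implicit Arguments.
Unset Strict Implicit.
Unset Printing Implicit Defensive.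
Import Order.TTheory GRing.Theory Num.Theory.
Local Open Scope ring_scope.

Lemma sup_attained (R : realType) (E : set R) (w : R) :
  E w -> (forall y, E y -> y <= w) -> sup E = w.
Proof.
move=> Ew ub; apply: le_anti; rewrite ge_sup //=; last by exists w.
by apply: ub_le_sup => //; exists w.
Qed.

Lemma sum_eq_indicator (T : pzSemiRingType) n (a : 'I_n) :
  \sum_(x < n) ((x == a)%:R : T) = 1.
Proof. by rewrite (bigD1 a) //= eqxx big1 ?addr0 // => x /negPf ->. Qed.

Section GuessingGame.
Context {R : realType}.
Variables (n k : nat) (c : 'I_n -> 'I_k -> R).

Definition score (w : 'I_n -> 'I_k -> R) := \sum_x \sum_j w x j * c x j.

Definition guess_weight (g : 'I_k -> 'I_n) x j : R := (x == g j)%:R.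

Definition best_guess (g : 'I_k -> 'I_n) := forall x j, c x j <= c (g j) j.

Lemma exists_best_guess : (0 < n)%N -> exists g, best_guess g.
Proof.
move=> n_gt0; pose x0 := Ordinal n_gt0.
exists (fun j => [arg max_(x > x0) c x j]%O) => x j.
by case: arg_maxP => // y _ /(_ x isT).
Qed.

Lemma guess_weight_cond_prob g : is_cond_prob (guess_weight g).
Proof. by split=> [x j|j]; [rewrite ler0n | exact: sum_eq_indicator]. Qed.

Lemma score_guess_weight g : score (guess_weight g) = \sum_j c (g j) j.
Proof.
rewrite /score exchange_big /=; apply: eq_bigr => j _.
rewrite (bigD1 (g j)) //= /guess_weight eqxx mul1r big1 ?addr0 // => x /negPf ->.
by rewrite mul0r.
Qed.

Lemma score_le_best_guess g w :
  best_guess g -> is_cond_prob w -> score w <= score (guess_weight g).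
Proof.
move=> best [w_ge0 w_sum1]; rewrite score_guess_weight /score exchange_big /=.
apply: ler_sum => j _; rewrite -[c (g j) j]mul1r -(w_sum1 j) mulr_suml.
by apply: ler_sum => x _; apply: ler_wpM2l.
Qed.

Lemma sup_scores (E : set R) g : best_guess g ->
  E (score (guess_weight g)) ->
  (forall y, E y -> exists2 w, is_cond_prob w & y = score w) ->
  sup E = score (guess_weight g).
Proof.
move=> best Eg scoresE; apply: sup_attained => // y /scoresE [w w_cond ->].
exact: score_le_best_guess.
Qed.

End GuessingGame.

Section Matrices.
Context {R : realType}.
Local Notation C := R[i].

Lemma Re_sum I (r : seq I) (P : pred I) (F : I -> C) :
  complex.Re (\sum_(i <- r | P i) F i) = \sum_(i <- r | P i) complex.Re (F i).
Proof. exact: (raddf_sum (@complex.Re R : Rcomplex R -> R)). Qed.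

Lemma ReMr (a : R) (z : C) : complex.Re (a%:C%C * z) = a * complex.Re z.
Proof. by case: z => x y /=; rewrite mul0r subr0. Qed.

Lemma ge0_complexE (z : C) :
  0 <= z -> z = (complex.Re z)%:C%C /\ 0 <= complex.Re z.
Proof. by case: z => a b; rewrite lecE /= => /andP[/eqP -> ?]. Qed.

Lemma sum_mxtens_index m p (F : 'I_(m * p) -> C) :
  \sum_I F I = \sum_(i < m) \sum_(a < p) F (mxtens_index (i, a)).
Proof.
rewrite pair_bigA /= (reindex (@mxtens_index m p)) /=.
  by apply: eq_bigr => -[i a].
by exists (@mxtens_unindex m p) => I _; [exact: mxtens_indexK | exact: mxtens_unindexK].
Qed.

Lemma mxtrace_mulmx_tens m p (A B : 'M[C]_(m * p)) :
  \tr (A *m B) = \sum_(i < m) \sum_(a < p) \sum_(j < m) \sum_(b < p)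
     A (mxtens_index (i, a)) (mxtens_index (j, b)) *
     B (mxtens_index (j, b)) (mxtens_index (i, a)).
Proof.
rewrite /mxtrace sum_mxtens_index; apply: eq_bigr => i _; apply: eq_bigr => a _.
by rewrite mxE sum_mxtens_index.
Qed.

Lemma mxtrace_mul_delta d (A : 'M[C]_d) a : \tr (A *m delta_mx a a) = A a a.
Proof.
rewrite /mxtrace (bigD1 a) //= big1 ?addr0 => [|i /negPf ia].
  rewrite mxE (bigD1 a) //= mxE !eqxx mulr1 big1 ?addr0 // => j /negPf ja.
  by rewrite mxE ja mulr0.
by rewrite mxE big1 // => j _; rewrite mxE ia andbF mulr0.
Qed.

Lemma qformE d (A : 'M[C]_d) (v : 'cV[C]_d) :
  (adjmx v *m A *m v) 0 0 = \sum_i \sum_j ((v i 0)^*%C * A i j * v j 0).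
Proof.
rewrite mxE exchange_big /=; apply: eq_bigr => j _.
by rewrite mxE mulr_suml; apply: eq_bigr => i _; rewrite /adjmx !mxE.
Qed.

Lemma psd_diag_ge0 d (A : 'M[C]_d) i : psd A -> 0 <= A i i.
Proof.
move=> /(_ (delta_mx i 0)); rewrite qformE (bigD1 i) //= [X in _ + X]big1 ?addr0.
  rewrite (bigD1 i) //= big1 ?addr0; last by move=> j /negPf ji; rewrite !mxE ji mulr0.
  by rewrite !mxE !eqxx conjc_nat mul1r mulr1.
move=> j /negPf ji; rewrite big1 // => l _.
by rewrite !mxE ji conjc_nat !mul0r.
Qed.

Lemma psd_diag_mx d (D : 'rV[C]_d) : (forall i, 0 <= D 0 i) -> psd (diag_mx D).
Proof.
move=> D_ge0 v; rewrite qformE; apply: sumr_ge0 => i _.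
rewrite (bigD1 i) //= big1 ?addr0 => [|j /negPf ij]; last first.
  by rewrite mxE eq_sym ij mulr0n mulr0 mul0r.
by rewrite mxE eqxx mulr1n mulrC mulrA; apply: mulr_ge0 => //; exact: mulcJ_ge0.
Qed.

Definition tens_block d p (X : 'M[C]_(d * p)) (a b : 'I_p) : 'M[C]_d :=
  \matrix_(i, j) X (mxtens_index (i, a)) (mxtens_index (j, b)).

Lemma tens_idE d1 d2 p (phi : 'M[C]_d1 -> 'M[C]_d2) (X : 'M[C]_(d1 * p)) i a j b :
  tens_id phi X (mxtens_index (i, a)) (mxtens_index (j, b))
  = phi (tens_block X a b) i j.
Proof.
rewrite /tens_id summxE (bigD1 a) //= summxE (bigD1 b) //= tensmxE /ket_bra mxE.
rewrite !eqxx mulr1 big1 ?addr0 => [|b' /negPf b'b]; last first.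
  by rewrite tensmxE mxE eqxx eq_sym b'b mulr0.
rewrite big1 ?addr0 // => a' /negPf a'a; rewrite summxE big1 // => b' _.
by rewrite tensmxE mxE eq_sym a'a mulr0.
Qed.

Lemma qc_channelE dA dS (M : 'I_dS -> 'M[C]_dA) s :
  qc_channel M s = diag_mx (\row_j \tr (s *m M j)).
Proof. by rewrite diag_mx_sum_delta; apply: eq_bigr => j _; rewrite mxE. Qed.

Lemma tens_block_cq_state d n (lam : 'I_n -> R) (rho : 'I_n -> 'M[C]_d) a b :
  tens_block (cq_state lam rho) a b = ((a == b)%:R * (lam a)%:C%C) *: rho a.
Proof.
apply/matrixP => i i'; rewrite !mxE /cq_state summxE (bigD1 a) //= big1 ?addr0.
  rewrite !mxE !mxtens_indexK /= eqxx /= [b == a]eq_sym.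
  by case: (a == b); rewrite ?mul1r ?mul0r ?mulr1 ?mulr0.
by move=> x /negPf xa; rewrite !mxE !mxtens_indexK /= eq_sym xa !mulr0.
Qed.

Lemma tens_block_max_ent_op d (a : 'I_d) :
  tens_block (max_ent_op R d) a a = delta_mx a a.
Proof.
apply/matrixP => i i'; rewrite !mxE /max_ent_op summxE (bigD1 a) //= summxE.
rewrite (bigD1 a) //= big1 ?addr0 => [|b /negPf ba]; last first.
  by rewrite tensmxE /ket_bra !mxE eqxx [a == b]eq_sym ba /= mulr0.
rewrite big1 ?addr0 => [|b /negPf ba]; last first.
  by rewrite summxE big1 // => b' _; rewrite tensmxE /ket_bra !mxE [a == b]eq_sym ba /= mulr0.
by rewrite tensmxE /ket_bra !mxE !eqxx mulr1.
Qed.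

Lemma choi_hs_adjoint_diag dS n (alpha : 'M[C]_dS -> 'M[C]_n) j a :
  choi (hs_adjoint alpha) (mxtens_index (j, a)) (mxtens_index (j, a))
  = (alpha (ket_bra R j j) a a)^*%C.
Proof.
rewrite /choi tens_idE tens_block_max_ent_op /hs_adjoint mxE mxtrace_mul_delta.
by rewrite /adjmx !mxE.
Qed.

Lemma tens_id_qc_cq_stateE dA n dS (lam : 'I_n -> R) (rho : 'I_n -> 'M[C]_dA)
    (M : 'I_dS -> 'M[C]_dA) j a j' b :
  tens_id (qc_channel M) (cq_state lam rho) (mxtens_index (j, a)) (mxtens_index (j', b))
  = (j == j')%:R * ((a == b)%:R * (lam a)%:C%C * \tr (rho a *m M j)).
Proof.
rewrite tens_idE qc_channelE tens_block_cq_state !mxE -scalemxAl mxtraceZ.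
by rewrite [RHS]mulr_natl.
Qed.

Lemma pairing_qc_cq_state dA n dS (lam : 'I_n -> R) (rho : 'I_n -> 'M[C]_dA)
    (M : 'I_dS -> 'M[C]_dA) (alpha : 'M[C]_dS -> 'M[C]_n) :
  pairing (tens_id (qc_channel M) (cq_state lam rho)) alpha =
  \sum_j \sum_a (lam a)%:C%C * \tr (rho a *m M j) * (alpha (ket_bra R j j) a a)^*%C.
Proof.
rewrite /pairing mxtrace_mulmx_tens; apply: eq_bigr => j _; apply: eq_bigr => a _.
rewrite (bigD1 j) //= [X in _ + X]big1 ?addr0 => [|j' /negPf j'j]; last first.
  by rewrite big1 // => b _; rewrite tens_id_qc_cq_stateE eq_sym j'j !mul0r.
rewrite (bigD1 a) //= big1 ?addr0 => [|b /negPf ba]; last first.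
  by rewrite tens_id_qc_cq_stateE eq_sym ba !mul0r mulr0 mul0r.
by rewrite tens_id_qc_cq_stateE choi_hs_adjoint_diag !eqxx !mul1r.
Qed.

Definition block_vec d p (j : 'I_d) (w : 'I_p -> C) : 'cV[C]_(d * p) :=
  \col_I (((mxtens_unindex I).1 == j)%:R * w (mxtens_unindex I).2).

Lemma qform_block_vec d p (X : 'M[C]_(d * p)) j (w : 'I_p -> C) :
  (adjmx (block_vec j w) *m X *m block_vec j w) 0 0 = \sum_c \sum_c'
    (w c)^*%C * X (mxtens_index (j, c)) (mxtens_index (j, c')) * w c'.
Proof.
rewrite qformE sum_mxtens_index (bigD1 j) //= [X in _ + X]big1 ?addr0.
  apply: eq_bigr => c _; rewrite sum_mxtens_index (bigD1 j) //= [X in _ + X]big1 ?addr0.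
    by apply: eq_bigr => c' _; rewrite !mxE !mxtens_indexK /= eqxx !mul1r.
  by move=> l /negPf lj; apply: big1 => c' _; rewrite !mxE !mxtens_indexK /= lj mul0r mulr0.
move=> l /negPf lj; apply: big1 => c _; apply: big1 => J _.
by rewrite !mxE mxtens_indexK /= lj mul0r conjc0 !mul0r.
Qed.

Lemma psd_delta_mx d (i : 'I_d) : psd (delta_mx i i : 'M[C]_d).
Proof.
have -> : delta_mx i i = diag_mx (delta_mx 0 i) :> 'M[C]_d.
  apply/matrixP => j l; rewrite !mxE eqxx /=.
  case: (eqVneq j l) => [<-|jl]; first by rewrite mulr1n andbb.
  by case: (j =P i) => [ji|//]; rewrite mulr0n -ji eq_sym (negPf jl).
by apply: psd_diag_mx => j; rewrite mxE ler0n.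
Qed.

Lemma completely_positive_diag_ge0 d1 d2 (phi : 'M[C]_d1 -> 'M[C]_d2) i a :
  completely_positive phi -> 0 <= phi (ket_bra R i i) a a.
Proof.
move=> cp; pose I : 'I_(d1 * 1) := mxtens_index (i, ord0).
have := psd_diag_ge0 (mxtens_index (a, ord0)) (cp 1%N _ (psd_delta_mx I)).
rewrite tens_idE; congr (0 <= phi _ a a); apply/matrixP => i1 i2.
by rewrite !mxE !(inj_eq (can_inj (@mxtens_indexK d1 1))) !xpair_eqE !eqxx !andbT.
Qed.

Lemma trace_preserving_diag_sum d1 d2 (phi : 'M[C]_d1 -> 'M[C]_d2) i :
  trace_preserving phi -> \sum_a phi (ket_bra R i i) a a = 1.
Proof.
move=> /(_ (ket_bra R i i)); rewrite /mxtrace => ->.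
by rewrite -/(mxtrace _) -[ket_bra R i i]mul1mx mxtrace_mul_delta mxE eqxx.
Qed.

Lemma channel_diag_cond_prob d n (alpha : 'M[C]_d -> 'M[C]_n) :
  is_channel alpha -> exists2 w : 'I_n -> 'I_d -> R, is_cond_prob w &
    forall a j, alpha (ket_bra R j j) a a = (w a j)%:C%C.
Proof.
case=> _ cp tp; have diagE a j := ge0_complexE (completely_positive_diag_ge0 j a cp).
exists (fun a j => complex.Re (alpha (ket_bra R j j) a a)).
  by split=> [a j|j]; [case: (diagE a j) | rewrite -Re_sum trace_preserving_diag_sum].
by move=> a j; case: (diagE a j).
Qed.

Lemma measurement_diag_cond_prob d n (N : 'I_n -> 'M[C]_d) :
  is_measurement N -> exists2 w : 'I_n -> 'I_d -> R, is_cond_prob w &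
    forall x j, N x j j = (w x j)%:C%C.
Proof.
case=> N_psd N_sum; have diagE x j := ge0_complexE (psd_diag_ge0 j (N_psd x)).
exists (fun x j => complex.Re (N x j j)).
  by split=> [x j|j]; [case: (diagE x j) | rewrite -Re_sum -summxE N_sum mxE eqxx].
by move=> x j; case: (diagE x j).
Qed.

End Matrices.

Section GuessStrategies.
Context {R : realType}.
Local Notation C := R[i].
Variables (d n : nat) (g : 'I_d -> 'I_n).

Definition guess_channel (s : 'M[C]_d) : 'M[C]_n :=
  diag_mx (\row_a \sum_j (a == g j)%:R * s j j).

Definition guess_measurement (x : 'I_n) : 'M[C]_d :=
  diag_mx (\row_j (x == g j)%:R).

Lemma guess_measurement_is_measurement : is_measurement guess_measurement.
Proof.
split=> [x|]; first by apply: psd_diag_mx => j; rewrite mxE ler0n.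
apply/matrixP => i j; rewrite summxE !mxE.
under eq_bigr do rewrite !mxE.
by rewrite sumrMnl sum_eq_indicator.
Qed.

Lemma guess_measurement_diag x j :
  guess_measurement x j j = (guess_weight g x j)%:C%C.
Proof. by rewrite !mxE eqxx mulr1n rmorph_nat. Qed.

Lemma guess_channel_diag a j :
  guess_channel (ket_bra R j j) a a = (guess_weight g a j)%:C%C.
Proof.
rewrite !mxE eqxx mulr1n (bigD1 j) //= big1 ?addr0 => [|l /negPf lj].
  by rewrite mxE !eqxx mulr1 rmorph_nat.
by rewrite mxE lj mulr0.
Qed.

Lemma guess_channel_linear : is_linear_map guess_channel.
Proof.
move=> c u v; apply/matrixP => a b; rewrite !mxE mulrnAr -mulrnDl.
rewrite mulr_sumr -big_split; congr (_ *+ _); apply: eq_bigr => j _.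
by rewrite !mxE mulrDr mulrCA.
Qed.

Lemma guess_channel_trace_preserving : trace_preserving guess_channel.
Proof.
move=> s; rewrite mxtrace_diag.
under eq_bigr do rewrite mxE.
rewrite exchange_big /=; apply: eq_bigr => j _.
by rewrite -mulr_suml sum_eq_indicator mul1r.
Qed.

Lemma qform_tens_guess_channel p (X : 'M[C]_(d * p)) (v : 'cV[C]_(n * p)) :
  (adjmx v *m tens_id guess_channel X *m v) 0 0 = \sum_a \sum_j (a == g j)%:R *
    (adjmx (block_vec j (fun c => v (mxtens_index (a, c)) 0)) *m X
       *m block_vec j (fun c => v (mxtens_index (a, c)) 0)) 0 0.
Proof.
rewrite qformE sum_mxtens_index; apply: eq_bigr => a _.
under [RHS]eq_bigr do rewrite qform_block_vec mulr_sumr.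
rewrite [RHS]exchange_big /=; apply: eq_bigr => c _.
rewrite sum_mxtens_index (bigD1 a) //= [X in _ + X]big1 ?addr0 => [|a' /negPf a'a]; last first.
  by apply: big1 => c' _; rewrite tens_idE !mxE eq_sym a'a mulr0n mulr0 mul0r.
under [RHS]eq_bigr do rewrite mulr_sumr.
rewrite [RHS]exchange_big /=; apply: eq_bigr => c' _.
rewrite tens_idE !mxE eqxx mulr1n mulr_sumr mulr_suml; apply: eq_bigr => j _.
by rewrite !mxE mulrCA !mulrA.
Qed.

Lemma guess_channel_completely_positive : completely_positive guess_channel.
Proof.
move=> p X X_psd v; rewrite qform_tens_guess_channel.
apply: sumr_ge0 => a _; apply: sumr_ge0 => j _.
by apply: mulr_ge0; [rewrite ler0n | exact: X_psd].
Qed.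

Lemma guess_channel_is_channel : is_channel guess_channel.
Proof.
split; [exact: guess_channel_linear | exact: guess_channel_completely_positive |
        exact: guess_channel_trace_preserving].
Qed.

End GuessStrategies.

Section Objectives.
Context {R : realType}.
Local Notation C := R[i].
Variables (dA n dS : nat) (lam : 'I_n -> R) (rho : 'I_n -> 'M[C]_dA)
  (M : 'I_dS -> 'M[C]_dA).

Definition gain x j := lam x * complex.Re (\tr (rho x *m M j)).

Lemma PQ_objectiveE (p : 'I_n -> 'I_dS -> R) :
  complex.Re (\sum_(x < n) \sum_(j < dS) ((lam x * p x j)%:C%C * \tr (rho x *m M j)))
  = score gain p.
Proof.
rewrite Re_sum; apply: eq_bigr => x _; rewrite Re_sum; apply: eq_bigr => j _.
by rewrite ReMr /gain mulrCA mulrA.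
Qed.

Lemma pairing_objectiveE (alpha : 'M[C]_dS -> 'M[C]_n) w :
  (forall a j, alpha (ket_bra R j j) a a = (w a j)%:C%C) ->
  complex.Re (pairing (tens_id (qc_channel M) (cq_state lam rho)) alpha)
  = score gain w.
Proof.
move=> alphaE; rewrite pairing_qc_cq_state exchange_big Re_sum.
apply: eq_bigr => a _; rewrite Re_sum; apply: eq_bigr => j _.
by rewrite alphaE conjc_real mulrC !ReMr.
Qed.

Lemma P_succ_objectiveE (N : 'I_n -> 'M[C]_dS) w :
  (forall x j, N x j j = (w x j)%:C%C) ->
  complex.Re (\sum_(x < n) (lam x)%:C%C * \tr (qc_channel M (rho x) *m N x))
  = score gain w.
Proof.
move=> NE; rewrite Re_sum; apply: eq_bigr => x _.
rewrite qc_channelE mul_diag_mx /mxtrace mulr_sumr Re_sum; apply: eq_bigr => j _.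
by rewrite !mxE NE [_ * (w x j)%:C%C]mulrC mulrCA !ReMr.
Qed.

End Objectives.

Theorem lemma4 (R : realType) (dA n dS : nat)
  (lam : 'I_n -> R) (rho : 'I_n -> 'M[R[i]]_dA) (M : 'I_dS -> 'M[R[i]]_dA) :
  is_ensemble lam rho -> is_measurement M ->
  PQ_succ lam rho M = diamond_norm (tens_id (qc_channel M) (cq_state lam rho))
  /\ diamond_norm (tens_id (qc_channel M) (cq_state lam rho))
     = P_succ lam (fun x => qc_channel M (rho x)).
Proof.
move=> [_ [lam_sum1 _]] _.
have n_gt0 : (0 < n)%N.
  by case: n lam lam_sum1 {rho} => // lam; rewrite big_ord0 => /eqP; rewrite eq_sym oner_eq0.
have [g best] := exists_best_guess (gain lam rho M) n_gt0.
set W := score (gain lam rho M) (guess_weight g).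
suff [-> -> ->] : [/\ PQ_succ lam rho M = W,
    diamond_norm (tens_id (qc_channel M) (cq_state lam rho)) = W
  & P_succ lam (fun x => qc_channel M (rho x)) = W] by [].
split; apply: sup_scores best _ _.
- by exists (guess_weight g); [exact: guess_weight_cond_prob | rewrite PQ_objectiveE].
- by move=> _ [p p_cond <-]; exists p; rewrite ?PQ_objectiveE.
- exists (guess_channel g); first exact: guess_channel_is_channel.
  by rewrite (pairing_objectiveE _ _ _ (guess_channel_diag g)).
- move=> _ [alpha /channel_diag_cond_prob [w w_cond alphaE] <-].
  by exists w; rewrite ?(pairing_objectiveE _ _ _ alphaE).
- exists (guess_measurement g); first exact: guess_measurement_is_measurement.
  by rewrite (P_succ_objectiveE _ _ _ (guess_measurement_diag g)).
- move=> _ [N /measurement_diag_cond_prob [w w_cond NE] <-].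
  by exists w; rewrite ?(P_succ_objectiveE _ _ _ NE).
Qed.
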